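(* Let $(X,T)$ be a dynamical system with metric $d$, $(Y,S)$ a dynamical system with metric $d'$, and $\pi:(X,T)\to(Y,S)$ an equivariant continuous map. Then $\overline{\mathrm{mdim}}_{\mathrm{M}}(\pi,T,d)=\limsup_{\varepsilon\to0}\left\{\lim_{\delta\to0}\lim_{N\to\infty}\frac{\sup_{y\in Y}\log\#\left(\pi^{-1}(B_\delta(y,d'_N)),d_N,\varepsilon\right)}{N\log(1/\varepsilon)}\right\}$ and $\underline{\mathrm{mdim}}_{\mathrm{M}}(\pi,T,d)=\liminf_{\varepsilon\to0}\left\{\lim_{\delta\to0}\lim_{N\to\infty}\frac{\sup_{y\in Y}\log\#\left(\pi^{-1}(B_\delta(y,d'_N)),d_N,\varepsilon\right)}{N\log(1/\varepsilon)}\right\}$.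
   Context: A dynamical system is a compact metrizable space with a homeomorphism; $\pi$ equivariant means $\pi\circ T=S\circ\pi$. For $N\ge1$, $d_N(x,y)=\max_{0\le n<N}d(T^nx,T^ny)$ and $d'_N$ similarly for $S$. $B_r(y,d'_N)=\{z\in Y: d'_N(z,y)\le r\}$. For $E\subset X$, $\#(E,d_N,\varepsilon)$ is the minimal number of open sets of $d_N$-diameter $<\varepsilon$ covering $E$ ($0$ if empty). The upper and lower conditional metric mean dimensions are $\overline{\mathrm{mdim}}_{\mathrm{M}}(\pi,T,d)=\limsup_{\varepsilon\to0}\lim_{N\to\infty}\frac{\sup_{y\in Y}\log\#(\pi^{-1}(y),d_N,\varepsilon)}{N\log(1/\varepsilon)}$ and $\underline{\mathrm{mdim}}_{\mathrm{M}}(\pi,T,d)$ the same with $\liminf_{\varepsilon\to0}$. *)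

From HB Require Import structures.
From mathcomp Require Import all_boot all_order all_algebra.
From mathcomp Require Import all_classical all_reals all_analysis.
Set Implicit Arguments. Unset Strict Implicit. Unset Printing Implicit Defensive.
Import Order.TTheory GRing.Theory Num.Theory.
Import numFieldNormedType.Exports.
Local Open Scope classical_set_scope.
Local Open Scope ring_scope.

Section Defs.
Variable R : realType.

Definition is_metric (X : Type) (d : X -> X -> R) :=
  [/\ forall x y, 0 <= d x y,
      forall x y, d x y = 0 <-> x = y,
      forall x y, d x y = d y x &
      forall x y z, d x z <= d x y + d y z].

Definition dopen (X : Type) (d : X -> X -> R) (U : set X) :=
  forall x, U x -> exists2 e : R, 0 < e & [set z | d x z < e] `<=` U.

Definition dcompact (X : Type) (d : X -> X -> R) :=
  forall (I : Type) (U : I -> set X), (forall i, dopen d (U i)) ->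
    (forall x, exists i, U i x) ->
    exists (n : nat) (f : 'I_n -> I), forall x, exists k, U (f k) x.

Definition dcontinuous (X Y : Type) (d : X -> X -> R) (d' : Y -> Y -> R)
  (f : X -> Y) :=
  forall x (e : R), 0 < e -> exists2 del : R, 0 < del &
    forall z, d x z < del -> d' (f x) (f z) < e.

Definition dhomeo (X : Type) (d : X -> X -> R) (T : X -> X) :=
  exists Ti : X -> X, [/\ cancel T Ti, cancel Ti T,
    dcontinuous d d T & dcontinuous d d Ti].

Definition dyn_system (X : Type) (d : X -> X -> R) (T : X -> X) :=
  [/\ is_metric d, dcompact d & dhomeo d T].

Definition dN (X : Type) (d : X -> X -> R) (T : X -> X) (N : nat) (x y : X) : R :=
  \big[Num.max/0]_(n < N) d (iter n T x) (iter n T y).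

Definition ediam (X : Type) (dd : X -> X -> R) (U : set X) : \bar R :=
  ereal_sup [set (dd x y)%:E | x in U & y in U].

Definition covers_with (X : Type) (d : X -> X -> R) (T : X -> X)
  (E : set X) (N : nat) (eps : R) (n : nat) :=
  exists U : 'I_n -> set X,
    [/\ forall i, dopen d (U i),
        forall i, (ediam (dN d T N) (U i) < eps%:E)%E &
        E `<=` \bigcup_i U i].

(** #(E, d_N, eps): the minimal such n (0 if E is empty) *)
Definition covnum (X : Type) (d : X -> X -> R) (T : X -> X)
  (E : set X) (N : nat) (eps : R) : nat :=
  xget 0%N [set n | covers_with d T E N eps n /\
                    forall m, covers_with d T E N eps m -> (n <= m)%N].

Definition logcov (X : Type) (d : X -> X -> R) (T : X -> X)
  (E : set X) (N : nat) (eps : R) : \bar R :=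
  if covnum d T E N eps == 0%N then -oo%E
  else (ln (covnum d T E N eps)%:R)%:E.

Definition elimsup0 (g : R -> \bar R) : \bar R :=
  ereal_inf [set ereal_sup (g @` [set e | 0 < e < r]) | r in [set r : R | 0 < r]].
Definition eliminf0 (g : R -> \bar R) : \bar R :=
  ereal_sup [set ereal_inf (g @` [set e | 0 < e < r]) | r in [set r : R | 0 < r]].

Definition fib_quot (X Y : Type) (d : X -> X -> R) (T : X -> X) (pi : X -> Y)
  (N : nat) (eps : R) : \bar R :=
  (ereal_sup [set logcov d T (pi @^-1` [set y]) N eps | y in [set: Y]]
   * ((N%:R * ln (1 / eps))^-1)%:E)%E.

Definition fib_lim (X Y : Type) (d : X -> X -> R) (T : X -> X) (pi : X -> Y)
  (eps : R) : \bar R :=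
  lim ((fun N : nat => fib_quot d T pi N.+1 eps) @ \oo).

Definition mdimM_upper (X Y : Type) (d : X -> X -> R) (T : X -> X) (pi : X -> Y) :=
  elimsup0 (fib_lim d T pi).
Definition mdimM_lower (X Y : Type) (d : X -> X -> R) (T : X -> X) (pi : X -> Y) :=
  eliminf0 (fib_lim d T pi).

Definition dball (Y : Type) (d' : Y -> Y -> R) (S : Y -> Y) (N : nat)
  (y : Y) (del : R) : set Y :=
  [set z | dN d' S N z y <= del].

Definition ball_quot (X Y : Type) (d : X -> X -> R) (T : X -> X)
  (d' : Y -> Y -> R) (S : Y -> Y) (pi : X -> Y) (N : nat) (eps del : R) : \bar R :=
  (ereal_sup [set logcov d T (pi @^-1` dball d' S N y del) N eps | y in [set: Y]]
   * ((N%:R * ln (1 / eps))^-1)%:E)%E.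

Definition ball_lim (X Y : Type) (d : X -> X -> R) (T : X -> X)
  (d' : Y -> Y -> R) (S : Y -> Y) (pi : X -> Y) (eps : R) : \bar R :=
  lim ((fun del : R =>
          lim ((fun N : nat => ball_quot d T d' S pi N.+1 eps del) @ \oo))
       @ 0^'+).

End Defs.

(* Fix eps > 0 and write c_del(N) for the largest covering number, at scale eps
   and time N, of a set pi^-1(B_del(y, d'_N)).  Such a set at time N + M lies in
   the preimage of a ball at time N around y, whose T^N-image lies in the
   preimage of a ball at time M around S^N y; hence c_del(N + M) <= c_del(N)
   c_del(M), and by Fekete's argument (1/N) log c_del(N) converges to its
   infimum h(del).  For del = 0 the balls are the fibres, so h(0) is the
   fibrewise limit.  As del decreases to 0, h(del) decreases to h(0): for each N,
   compactness of X shows that an optimal cover of a fibre pi^-1(y) also covers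
   pi^-1(B_r(y, d'_N)) for some r > 0, and compactness of Y makes the radius
   uniform in y, so c_del(N) <= c_0(N) for del small enough. *)

From HB Require Import structures.
From mathcomp Require Import all_boot all_order all_algebra.
From mathcomp Require Import all_classical all_reals all_analysis.
From mathcomp Require Import lra.
Import Order.TTheory GRing.Theory Num.Theory.
Import numFieldNormedType.Exports.
Local Open Scope classical_set_scope.
Local Open Scope ring_scope.

Set Implicit Arguments. Unset Strict Implicit. Unset Printing Implicit Defensive.

Lemma iter_semiconj (A B : Type) (f : A -> B) (g : A -> A) (h : B -> B) :
  (forall x, f (g x) = h (f x)) -> forall n x, f (iter n g x) = iter n h (f x).
Proof. by move=> fgh; elim=> //= n IHn x; rewrite fgh IHn. Qed.

Section BowenMetric.
Variables (R : realType) (X : Type) (d : X -> X -> R) (T : X -> X).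

Lemma dN0 x y : dN d T 0 x y = 0.
Proof. by rewrite /dN big_ord0. Qed.

Lemma dNS N x y : dN d T N.+1 x y = Num.max (d x y) (dN d T N (T x) (T y)).
Proof.
rewrite /dN big_ord_recl; congr Num.max.
by apply: eq_bigr => i _; rewrite /= -!iterSr.
Qed.

Lemma dN_leP N x y c : dN d T N x y <= c <->
  0 <= c /\ forall n, (n < N)%N -> d (iter n T x) (iter n T y) <= c.
Proof.
split=> [/bigmax_leP[c_ge0 le_c]|[c_ge0 le_c]].
  by split=> // n ltnN; exact: (le_c (Ordinal ltnN)).
by apply/bigmax_leP; split=> // i _; exact: le_c.
Qed.

Lemma dN_ge0 N x y : 0 <= dN d T N x y.
Proof. by rewrite /dN; elim/big_rec: _ => // i m _ m_ge0; rewrite le_max m_ge0 orbT. Qed.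

Lemma dN_ge_iter N n x y : (n < N)%N -> d (iter n T x) (iter n T y) <= dN d T N x y.
Proof. by move=> ltnN; have [_] := proj1 (dN_leP N x y _) (lexx _); apply. Qed.

Lemma dN_leN N M x y : (N <= M)%N -> dN d T N x y <= dN d T M x y.
Proof.
move=> leNM; apply/dN_leP; split=> [|n ltnN]; first exact: dN_ge0.
exact/dN_ge_iter/(leq_trans ltnN).
Qed.

Lemma dN_addn_leP N M x y c : dN d T (N + M) x y <= c <->
  dN d T N x y <= c /\ dN d T M (iter N T x) (iter N T y) <= c.
Proof.
split=> [/dN_leP[c_ge0 le_c]|[/dN_leP[c_ge0 le_c1] /dN_leP[_ le_c2]]].
  split; apply/dN_leP; split=> // n ltn; first exact/le_c/ltn_addr.
  by rewrite -!iterD; apply: le_c; rewrite addnC ltn_add2l.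
apply/dN_leP; split=> // n ltn; have [ltnN|leNn] := ltnP n N; first exact: le_c1.
by rewrite -(subnK leNn) !iterD; apply: le_c2; rewrite ltn_subLR.
Qed.

Hypothesis dm : is_metric d.

Lemma dNC N x y : dN d T N x y = dN d T N y x.
Proof. by case: dm => _ _ dC _; apply: eq_bigr => i _; exact: dC. Qed.

Lemma dN_triangle N x y z : dN d T N x z <= dN d T N x y + dN d T N y z.
Proof.
case: dm => d_ge0 _ _ d_tri; apply/dN_leP; split=> [|n ltnN].
  by rewrite addr_ge0 ?dN_ge0.
by apply: le_trans (d_tri _ (iter n T y) _) _; apply: lerD; exact: dN_ge_iter.
Qed.

Lemma dNxx N x : dN d T N x x = 0.
Proof.
case: dm => _ d_eq0 _ _; apply/eqP; rewrite eq_le dN_ge0 andbT.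
by apply/dN_leP; split=> // n _; rewrite (proj2 (d_eq0 _ _) erefl).
Qed.

Lemma dball0 N y : (0 < N)%N -> dball d T N y 0 = [set y].
Proof.
case: dm => d_ge0 d_eq0 _ _ N_gt0; apply/seteqP; split=> [z /= le_z0|z /= ->].
  have := le_trans (dN_ge_iter z y N_gt0) le_z0.
  by rewrite /= => le_d0; apply/d_eq0/eqP; rewrite eq_le le_d0 d_ge0.
by rewrite /dball /= dNxx.
Qed.

End BowenMetric.

Section MetricTopology.
Variable R : realType.
Implicit Types A B C : Type.

Lemma dcontinuous_id A (sa : A -> A -> R) : dcontinuous sa sa id.
Proof. by move=> x e e_gt0; exists e. Qed.

Lemma dcontinuous_comp A B C (sa : A -> A -> R) (sb : B -> B -> R)
    (sc : C -> C -> R) (f : A -> B) (g : B -> C) :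
  dcontinuous sa sb f -> dcontinuous sb sc g -> dcontinuous sa sc (g \o f).
Proof.
move=> fcont gcont x e e_gt0; have [r r_gt0 hr] := gcont (f x) e e_gt0.
by have [s s_gt0 hs] := fcont x r r_gt0; exists s => // z /hs /hr.
Qed.

Lemma dcontinuous_iter A (sa : A -> A -> R) (T : A -> A) n :
  dcontinuous sa sa T -> dcontinuous sa sa (iter n T).
Proof.
move=> Tcont; elim: n => [|n IHn]; first exact: dcontinuous_id.
exact: dcontinuous_comp IHn Tcont.
Qed.

Lemma dcontinuous_dN A B (sa : A -> A -> R) (rho : B -> B -> R) (Q : B -> B) L
    (f : A -> B) :
  dcontinuous sa rho f -> dcontinuous rho rho Q -> dcontinuous sa (dN rho Q L) f.
Proof.
move=> + Qcont; elim: L f => [|L IHL] f fcont x e e_gt0.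
  by exists 1 => // z _; rewrite dN0.
have [r r_gt0 hr] := fcont x e e_gt0.
have [s s_gt0 hs] := IHL _ (dcontinuous_comp fcont Qcont) x e e_gt0.
exists (Num.min r s) => [|z]; first by rewrite lt_min r_gt0.
by rewrite lt_min => /andP[/hr ltr /hs lts]; rewrite dNS gt_max ltr.
Qed.

Lemma dopen_preimage A B (sa : A -> A -> R) (sb : B -> B -> R) (f : A -> B) U :
  dcontinuous sa sb f -> dopen sb U -> dopen sa (f @^-1` U).
Proof.
move=> fcont Uopen x /Uopen[e e_gt0 he]; have [r r_gt0 hr] := fcont x e e_gt0.
by exists r => // z /hr /he.
Qed.

Lemma dopenI A (sa : A -> A -> R) U V : dopen sa U -> dopen sa V -> dopen sa (U `&` V).
Proof.
move=> Uopen Vopen x [/Uopen[r r_gt0 hr] /Vopen[s s_gt0 hs]].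
exists (Num.min r s) => [|z /=]; first by rewrite lt_min r_gt0.
by rewrite lt_min => /andP[/hr Uz /hs Vz].
Qed.

Lemma dopenU A (sa : A -> A -> R) U V : dopen sa U -> dopen sa V -> dopen sa (U `|` V).
Proof.
move=> Uopen Vopen x [/Uopen[e e_gt0 he]|/Vopen[e e_gt0 he]].
  by exists e => // z /he; left.
by exists e => // z /he; right.
Qed.

Lemma dopen_bigcup A I (sa : A -> A -> R) (U : I -> set A) (P : set I) :
  (forall i, dopen sa (U i)) -> dopen sa (\bigcup_(i in P) U i).
Proof. by move=> Uopen x [i Pi /Uopen[e e_gt0 he]]; exists e => // z /he; exists i. Qed.

Lemma dopen_dist_lt A (rho : A -> A -> R) a t :
  (forall x y, rho x y = rho y x) -> (forall x y z, rho x z <= rho x y + rho y z) ->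
  dopen rho [set b | rho b a < t].
Proof.
move=> rhoC rho_tri b /= ltt; exists (t - rho b a) => [|b' /=]; first by rewrite subr_gt0.
by rewrite rhoC => lt_bb'; have := rho_tri b' b a; lra.
Qed.

Lemma dopen_dist_gt A (rho : A -> A -> R) a t :
  (forall x y z, rho x z <= rho x y + rho y z) -> dopen rho [set b | t < rho b a].
Proof.
move=> rho_tri b /= gtt; exists (rho b a - t) => [|b' /=]; first by rewrite subr_gt0.
by move=> lt_bb'; have := rho_tri b b' a; lra.
Qed.

Lemma ediam_ltP A (dd : A -> A -> R) (U : set A) e : (ediam dd U < e%:E)%E <->
  exists2 e', e' < e & forall x y, U x -> U y -> dd x y <= e'.
Proof.
split; last first.
  move=> [e' lte' le_e']; apply: (@le_lt_trans _ _ e'%:E); last by rewrite lte_fin.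
  by apply: ge_ereal_sup => _ [x Ux [y Uy <-]]; rewrite lee_fin; exact: le_e'.
have ub x y : U x -> U y -> ((dd x y)%:E <= ediam dd U)%E.
  by move=> Ux Uy; apply: ereal_sup_ubound; exists x => //; exists y.
case E: (ediam dd U) ub => [r| |] // ub ltre.
- by exists r => [|x y Ux Uy]; [rewrite -lte_fin | rewrite -lee_fin ub].
- exists (e - 1) => [|x y Ux Uy]; first by rewrite ltrBlDr ltrDl.
  by have := ub x y Ux Uy; rewrite leeNy_eq.
Qed.

End MetricTopology.

Section CoveringNumber.
Variables (R : realType) (X : Type) (d : X -> X -> R) (T : X -> X) (eps : R).
Hypotheses (dm : is_metric d) (Tcont : dcontinuous d d T) (dcpt : dcompact d).
Hypothesis eps_gt0 : 0 < eps.

Lemma dopen_dN_ball N x r : dopen d [set z | dN d T N z x < r].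
Proof.
have idcont : dcontinuous d (dN d T N) id by exact: dcontinuous_dN (dcontinuous_id d) Tcont.
exact: dopen_preimage idcont (dopen_dist_lt (dNC T dm N) (dN_triangle T dm N)).
Qed.

Lemma covers_with_card E N (I : finType) (U : I -> set X) :
  (forall i, dopen d (U i)) -> (forall i, (ediam (dN d T N) (U i) < eps%:E)%E) ->
  E `<=` \bigcup_i U i -> covers_with d T E N eps #|I|.
Proof.
move=> Uopen Udiam EU; exists (fun k => U (enum_val k)); split=> // x /EU[i _ Uix].
by exists (enum_rank i) => //; rewrite enum_rankK.
Qed.

Lemma covers_with_exists E N : exists n, covers_with d T E N eps n.
Proof.
pose B x := [set z | dN d T N z x < eps / 3].
have B_cover x : exists y, B y x by exists x; rewrite /B /= dNxx // divr_gt0.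
have Bopen x : dopen d (B x) by exact: dopen_dN_ball.
have [n [f Bf_cover]] := dcpt Bopen B_cover.
exists n, (B \o f); split=> [k|k|x _]; first exact: Bopen.
  apply/ediam_ltP; exists (eps / 3 + eps / 3) => [|x y /= Bx By]; first by move: eps_gt0; lra.
  apply: le_trans (dN_triangle T dm N x (f k) y) _.
  by rewrite (dNC T dm N (f k)) lerD // ltW.
by have [k Bfkx] := Bf_cover x; exists k.
Qed.

Lemma covnumP E N : covers_with d T E N eps (covnum d T E N eps) /\
  forall m, covers_with d T E N eps m -> (covnum d T E N eps <= m)%N.
Proof.
suff /(xgetPex 0%N) : exists n, covers_with d T E N eps n /\
  forall m, covers_with d T E N eps m -> (n <= m)%N by [].
have ex_cov : exists n, `[< covers_with d T E N eps n >].
  by have [n covn] := covers_with_exists E N; exists n; apply/asboolP.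
have [n /asboolP covn min_n] := ex_minnP ex_cov.
by exists n; split=> // m /asboolP; exact: min_n.
Qed.

Lemma covnum_min E N m : covers_with d T E N eps m -> (covnum d T E N eps <= m)%N.
Proof. exact: (proj2 (covnumP E N)). Qed.

Lemma covnumS E F N : E `<=` F -> (covnum d T E N eps <= covnum d T F N eps)%N.
Proof.
move=> EF; have [[U [Uopen Udiam FU]] _] := covnumP F N.
by apply: covnum_min; exists U; split=> //; exact: subset_trans FU.
Qed.

Lemma covnum_gt0 E N x : E x -> (0 < covnum d T E N eps)%N.
Proof.
move=> Ex; have [[U [_ _ EU]] _] := covnumP E N.
by move: U EU; case: (covnum d T E N eps) => // U /(_ x Ex)[[]].
Qed.

Lemma covnum_leN E N M : (N <= M)%N ->
  (covnum d T E N eps <= covnum d T E M eps)%N.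
Proof.
move=> leNM; have [[U [Uopen Udiam EU]] _] := covnumP E M.
apply: covnum_min; exists U; split=> // i.
have /ediam_ltP[e' lte' le_e'] := Udiam i; apply/ediam_ltP; exists e' => // x y Ux Uy.
by apply: le_trans (le_e' x y Ux Uy); exact: dN_leN.
Qed.

Lemma covnum_addn_le E E1 E2 N M :
  (forall x, E x -> E1 x /\ E2 (iter N T x)) ->
  (covnum d T E (N + M) eps <= covnum d T E1 N eps * covnum d T E2 M eps)%N.
Proof.
move=> hE; have [[U1 [U1open U1diam E1U1]] _] := covnumP E1 N.
have [[U2 [U2open U2diam E2U2]] _] := covnumP E2 M.
pose U (p : 'I__ * 'I__) := U1 p.1 `&` (iter N T @^-1` U2 p.2).
rewrite -[covnum d T E1 N eps]card_ord -[covnum d T E2 M eps]card_ord -card_prod.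
apply/covnum_min/(@covers_with_card _ _ _ U) => [p|p|x /hE[/E1U1[i _ U1i] /E2U2[j _ U2j]]].
- exact/dopenI/dopen_preimage/U2open/dcontinuous_iter.
- have /ediam_ltP[e1 lte1 le_e1] := U1diam p.1.
  have /ediam_ltP[e2 lte2 le_e2] := U2diam p.2.
  apply/ediam_ltP; exists (Num.max e1 e2) => [|x y [U1x U2x] [U1y U2y]].
    by rewrite gt_max lte1.
  by apply/dN_addn_leP; rewrite !le_max le_e1 ?(le_e2 _ _ U2x U2y) ?orbT.
- by exists (i, j).
Qed.

Lemma covnum_open_nbhd E N : exists2 W, dopen d W &
  E `<=` W /\ forall F, F `<=` W -> (covnum d T F N eps <= covnum d T E N eps)%N.
Proof.
have [[U [Uopen Udiam EU]] _] := covnumP E N.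
exists (\bigcup_i U i); first exact: dopen_bigcup.
by split=> // F FU; apply: covnum_min; exists U.
Qed.

End CoveringNumber.

Section Fekete.
Variable R : realType.
Implicit Types w : nat -> R.

Lemma block_bound_ratio_le w (L : nat) (a b : R) : (0 < L)%N -> 0 <= a ->
  (forall q r, (r <= L)%N -> w (q * L + r)%N <= q%:R * a + b) ->
  forall eta, 0 < eta ->
  exists N0, forall N, (N0 <= N)%N -> w N / N%:R <= a / L%:R + eta.
Proof.
move=> L_gt0 a_ge0 wqr eta eta_gt0; exists (Num.bound (`|b| / eta)).+1 => N leN0N.
have N_gt0 : 0 < N%:R :> R by rewrite ltr0n (leq_trans _ leN0N).
have L_gt0' : 0 < L%:R :> R by rewrite ltr0n.
have b_lt : b < N%:R * eta.
  rewrite -ltr_pdivrMr //; apply: le_lt_trans (_ : `|b| / eta < _).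
    by rewrite ler_pM2r ?invr_gt0 // ler_norm.
  apply: lt_le_trans (archi_boundP _) _; first by rewrite divr_ge0 // ltW.
  by rewrite ler_nat ltnW.
have := wqr (N %/ L)%N (N %% L)%N (ltnW (ltn_pmod _ L_gt0)); rewrite -divn_eq => wN.
have qa : (N %/ L)%:R * a <= a / L%:R * N%:R.
  have qLN : (N %/ L)%:R * L%:R <= N%:R :> R by rewrite -natrM ler_nat leq_divM.
  have := ler_wpM2l (divr_ge0 a_ge0 (ltW L_gt0')) qLN.
  by rewrite mulrCA divfK ?gt_eqF.
rewrite ler_pdivrMr // mulrDl (mulrC eta); lra.
Qed.

Lemma cvg_ratio_inf w : (forall N, 0 <= w N) ->
  (forall L, (0 < L)%N -> forall eta, 0 < eta ->
     exists N0, forall N, (N0 <= N)%N -> w N / N%:R <= w L / L%:R + eta) ->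
  (fun N => w N.+1 / N.+1%:R) @ \oo --> inf [set w N.+1 / N.+1%:R | N in [set: nat]].
Proof.
move=> w_ge0 w_ev; set A := [set _ | N in _].
have A_inf : has_inf A.
  split; first by exists (w 1%N / 1%:R), 0%N.
  by exists 0 => _ [N _ <-]; rewrite divr_ge0.
apply/cvgrPdist_le => e e_gt0; have e2_gt0 : 0 < e / 2 by rewrite divr_gt0.
have [_ [L _ <-] ltL] := inf_adherent e2_gt0 A_inf.
have [N0 leN0] := w_ev L.+1 isT (e / 2) e2_gt0.
exists N0 => // N /= leN0N; have le_ratio := leN0 N.+1 (leqW leN0N).
have inf_le : inf A <= w N.+1 / N.+1%:R by apply: ge_inf; [case: A_inf | exists N].
move: ltL le_ratio inf_le; set u := w N.+1 / _; set v := w L.+1 / _ => ltL le_ratio inf_le.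
by rewrite ler_norml; apply/andP; split; lra.
Qed.

End Fekete.

Section FibreCovers.
Variables (R : realType) (X Y : Type) (d : X -> X -> R) (T : X -> X).
Variables (d' : Y -> Y -> R) (S : Y -> Y) (pi : X -> Y).
Hypotheses (dm : is_metric d) (Tcont : dcontinuous d d T) (dcpt : dcompact d).
Hypotheses (dm' : is_metric d') (Scont : dcontinuous d' d' S) (dcpt' : dcompact d').
Hypotheses (picont : dcontinuous d d' pi) (piT : forall x, pi (T x) = S (pi x)).

Lemma preimage_dball_sub_nbhd (W : set X) L y : dopen d W ->
  pi @^-1` dball d' S L y 0 `<=` W ->
  exists r : R, 0 < r /\ pi @^-1` dball d' S L y r `<=` W.
Proof.
move=> Wopen fibreW.
(* Off W the d'_L-distance to y is positive, so the O n form an open cover. *)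
pose O n := W `|` pi @^-1` [set b | n.+1%:R^-1 < dN d' S L b y].
have Oopen n : dopen d (O n).
  apply: dopenU Wopen (dopen_preimage (dcontinuous_dN _ picont Scont) _).
  exact: dopen_dist_gt (dN_triangle S dm' L).
have Ocover z : exists n, O n z.
  have [Wz|nWz] := pselect (W z); first by exists 0%N; left.
  have /ltr_add_invr[n ltn] : 0 < dN d' S L (pi z) y.
    rewrite lt_neqAle dN_ge0 andbT; apply: contra_notN nWz => /eqP dN0.
    by apply: fibreW; rewrite /preimage /dball /= -dN0.
  by exists n; right; rewrite /= -[_^-1]add0r.
have [m [f Of_cover]] := dcpt Oopen Ocover.
exists (\max_(k < m) f k).+1%:R^-1; split=> [|x /= lex]; first by rewrite invr_gt0 ltr0Sn.
have [k [//|/= ltk]] := Of_cover x; have := lt_le_trans ltk lex.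
by rewrite ltf_pV2 ?posrE ?ltr0Sn // ltr_nat ltnS ltnNge leq_bigmax.
Qed.

Section Scale.
Variable eps : R.
Hypothesis eps_gt0 : 0 < eps.

Definition ball_cov del N y := covnum d T (pi @^-1` dball d' S N y del) N eps.

Definition full_cov N := covnum d T setT N eps.

Lemma ball_cov_le_full del N y : (ball_cov del N y <= full_cov N)%N.
Proof. exact: covnumS. Qed.

Lemma le_ball_cov del1 del2 N y : del1 <= del2 ->
  (ball_cov del1 N y <= ball_cov del2 N y)%N.
Proof. by move=> le_del; apply: covnumS => // x /= /le_trans; apply. Qed.

Lemma ball_cov_addn_le del N M y :
  (ball_cov del (N + M) y <= ball_cov del N y * ball_cov del M (iter N S y))%N.
Proof.
apply: covnum_addn_le => // x /= /dN_addn_leP[le1 le2].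
by split=> //; rewrite (iter_semiconj piT).
Qed.

Lemma ball_cov_blocks del L K : (forall y, (ball_cov del L y <= K)%N) ->
  forall q r y, (r <= L)%N -> (ball_cov del (q * L + r) y <= K ^ q * full_cov L)%N.
Proof.
move=> leK; elim=> [|q IHq] r y ler.
  rewrite mul0n add0n expn0 mul1n; apply: leq_trans (ball_cov_le_full _ _ _) _.
  exact: covnum_leN.
rewrite mulSn -addnA; apply: leq_trans (ball_cov_addn_le _ _ _ _) _.
by rewrite expnS -mulnA leq_mul ?IHq.
Qed.

Lemma ball_cov_near_fibre L y : exists r : R, 0 < r /\ forall F,
  F `<=` pi @^-1` dball d' S L y r -> (covnum d T F L eps <= ball_cov 0 L y)%N.
Proof.
have [W Wopen [fibreW leW]] := covnum_open_nbhd dm Tcont dcpt eps_gt0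
  (pi @^-1` dball d' S L y 0) L.
have [r [r_gt0 ballW]] := preimage_dball_sub_nbhd Wopen fibreW.
by exists r; split=> // F /subset_trans /(_ ballW) /leW.
Qed.

Lemma ball_cov_uniform L K : (forall y, (ball_cov 0 L y <= K)%N) ->
  exists2 del, 0 < del & forall y, (ball_cov del L y <= K)%N.
Proof.
move=> leK; have /choice[r rP] := ball_cov_near_fibre L.
(* Balls of radius r y / 2 cover Y; by the triangle inequality the least
   half-radius of a finite subcover works for every y. *)
pose G y := [set y' | dN d' S L y' y < r y / 2].
have Gcover y : exists y', G y' y by exists y; rewrite /G /= dNxx // divr_gt0 ?(rP y).1.
have Gopen y : dopen d' (G y) by exact: dopen_dN_ball.
have [m [g Gg_cover]] := dcpt' Gopen Gcover.
exists (\big[Num.min/1]_(k < m) (r (g k) / 2)) => [|y].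
  by elim/big_rec: _ => // k s _ s_gt0; rewrite lt_min s_gt0 divr_gt0 ?(rP _).1.
have [k Ggy] := Gg_cover y; apply: leq_trans ((rP (g k)).2 _ _) (leK (g k)) => x /= lex.
have le_min : \big[Num.min/1]_(k < m) (r (g k) / 2) <= r (g k) / 2 by exact: bigmin_le.
have := splitr (r (g k)); have := dN_triangle S dm' L (pi x) y (g k).
move: lex le_min Ggy; rewrite /dball /G /=.
by set del := \big[_/_]_(_ < _) _; set s := r (g k) / 2; lra.
Qed.

Lemma fib_quot_ball_quot0 N : (0 < N)%N ->
  fib_quot d T pi N eps = ball_quot d T d' S pi N eps 0.
Proof.
move=> N_gt0; congr (ereal_sup _ * _)%E.
by apply: eq_imagel => y _; rewrite dball0.
Qed.

Definition max_ball_cov del N : nat := xget 0%N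
  [set B | (exists y, ball_cov del N y = B) /\ forall y, (ball_cov del N y <= B)%N].

Definition ball_rate del N := ln ((max_ball_cov del N)%:R : R).

Definition ball_entropy del := inf [set ball_rate del N.+1 / N.+1%:R | N in [set: nat]].

Variable x0 : X.

Lemma max_ball_covP del N : (exists y, ball_cov del N y = max_ball_cov del N) /\
  forall y, (ball_cov del N y <= max_ball_cov del N)%N.
Proof.
suff /(xgetPex 0%N) : exists B, (exists y, ball_cov del N y = B) /\
  forall y, (ball_cov del N y <= B)%N by [].
have ex_val : exists B, `[< exists y, ball_cov del N y = B >].
  by exists (ball_cov del N (pi x0)); apply/asboolP; exists (pi x0).
have le_full B : `[< exists y, ball_cov del N y = B >] -> (B <= full_cov N)%N.
  by move=> /asboolP[y <-]; exact: ball_cov_le_full.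
have [B /asboolP valB maxB] := ex_maxnP ex_val le_full.
by exists B; split=> // y; apply: maxB; apply/asboolP; exists y.
Qed.

Lemma ball_cov_gt0 del N : 0 <= del -> (0 < ball_cov del N (pi x0))%N.
Proof.
move=> del_ge0; apply: (covnum_gt0 dm Tcont dcpt eps_gt0 N (x := x0)).
by rewrite /preimage /dball /= (dNxx S dm').
Qed.

Lemma max_ball_cov_gt0 del N : 0 <= del -> (0 < max_ball_cov del N)%N.
Proof.
move=> del_ge0; apply: leq_trans (ball_cov_gt0 N del_ge0) _.
exact: (proj2 (max_ball_covP _ _)).
Qed.

Lemma full_cov_gt0 N : (0 < full_cov N)%N.
Proof. exact: (covnum_gt0 dm Tcont dcpt eps_gt0 N (x := x0)). Qed.

Lemma le_max_ball_cov del1 del2 N : del1 <= del2 ->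
  (max_ball_cov del1 N <= max_ball_cov del2 N)%N.
Proof.
move=> le_del; have [[y <-] _] := max_ball_covP del1 N.
exact: leq_trans (le_ball_cov _ _ le_del) (proj2 (max_ball_covP _ _) y).
Qed.

Lemma ereal_sup_logcov_ball del N : 0 <= del ->
  ereal_sup [set logcov d T (pi @^-1` dball d' S N y del) N eps | y in [set: Y]] =
  (ball_rate del N)%:E.
Proof.
move=> del_ge0; have [[y maxy] leB] := max_ball_covP del N.
have B_gt0 := max_ball_cov_gt0 N del_ge0.
apply/eqP; rewrite eq_le; apply/andP; split.
  apply: ge_ereal_sup => _ [y' _ <-]; rewrite /logcov -/(ball_cov del N y').
  case: eqP => [_|/eqP cov_neq0]; first exact: leNye.
  by rewrite lee_fin ler_ln ?posrE ?ltr0n ?B_gt0 ?lt0n // ler_nat leB.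
apply: ereal_sup_ubound; exists y => //.
by rewrite /logcov -/(ball_cov del N y) maxy ifN // -lt0n.
Qed.

Lemma ball_quotE del N : 0 <= del ->
  ball_quot d T d' S pi N eps del = (ball_rate del N / N%:R / ln (1 / eps))%:E.
Proof. by move=> del_ge0; rewrite /ball_quot ereal_sup_logcov_ball // -EFinM invfM mulrA. Qed.

Lemma ball_rate_ge0 del N : 0 <= del -> 0 <= ball_rate del N.
Proof. by move=> del_ge0; rewrite ln_ge0 // ler1n max_ball_cov_gt0. Qed.

Lemma le_ball_rate del1 del2 N : 0 <= del1 -> del1 <= del2 ->
  ball_rate del1 N <= ball_rate del2 N.
Proof.
move=> del1_ge0 le_del; have del2_ge0 := le_trans del1_ge0 le_del.
by rewrite ler_ln ?posrE ?ltr0n ?max_ball_cov_gt0 // ler_nat le_max_ball_cov.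
Qed.

Lemma ball_rate_blocks del L K : 0 <= del -> (forall y, (ball_cov del L y <= K)%N) ->
  forall q r, (r <= L)%N ->
  ball_rate del (q * L + r) <= q%:R * ln (K%:R : R) + ln ((full_cov L)%:R : R).
Proof.
move=> del_ge0 leK q r ler; have K_gt0 := leq_trans (ball_cov_gt0 L del_ge0) (leK _).
have [[y maxy] _] := max_ball_covP del (q * L + r).
have KM_gt0 : (0 < K ^ q * full_cov L)%N by rewrite muln_gt0 expn_gt0 K_gt0 full_cov_gt0.
have -> : q%:R * ln (K%:R : R) + ln (full_cov L)%:R = ln (K ^ q * full_cov L)%:R.
  rewrite natrM lnM ?posrE ?ltr0n ?expn_gt0 ?K_gt0 ?full_cov_gt0 //.
  by rewrite natrX lnXn ?ltr0n // mulr_natl.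
rewrite /ball_rate ler_ln ?posrE ?ltr0n ?max_ball_cov_gt0 ?KM_gt0 // ler_nat -maxy.
exact: ball_cov_blocks.
Qed.

Lemma ball_rate_ratio_le del : 0 <= del -> forall L, (0 < L)%N -> forall eta, 0 < eta ->
  exists N0, forall N, (N0 <= N)%N ->
  ball_rate del N / N%:R <= ball_rate del L / L%:R + eta.
Proof.
move=> del_ge0 L L_gt0; apply: (block_bound_ratio_le L_gt0 (ball_rate_ge0 L del_ge0)).
exact: ball_rate_blocks (proj2 (max_ball_covP del L)).
Qed.

Lemma cvg_ball_rate del : 0 <= del ->
  (fun N => ball_rate del N.+1 / N.+1%:R) @ \oo --> ball_entropy del.
Proof.
move=> del_ge0; apply: cvg_ratio_inf => [N|]; first exact: ball_rate_ge0.
exact: ball_rate_ratio_le.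
Qed.

Lemma has_inf_ball_rate del : 0 <= del ->
  has_inf [set ball_rate del N.+1 / N.+1%:R | N in [set: nat]].
Proof.
move=> del_ge0; split; first by exists (ball_rate del 1 / 1%:R), 0%N.
by exists 0 => _ [N _ <-]; rewrite divr_ge0 ?ball_rate_ge0.
Qed.

Lemma ball_entropy_le del N : 0 <= del -> ball_entropy del <= ball_rate del N.+1 / N.+1%:R.
Proof. by move=> del_ge0; apply: ge_inf; [case: (has_inf_ball_rate del_ge0) | exists N]. Qed.

Lemma ball_entropy0_le del : 0 <= del -> ball_entropy 0 <= ball_entropy del.
Proof.
move=> del_ge0; apply: lb_le_inf; first by exists (ball_rate del 1 / 1%:R), 0%N.
move=> _ [N _ <-]; apply: le_trans (ball_entropy_le N (lexx 0)) _.
by rewrite ler_wpM2r ?invr_ge0 ?le_ball_rate.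
Qed.

Lemma ball_entropy_le_near eta : 0 < eta -> exists2 r, 0 < r &
  forall del, 0 < del -> del <= r -> ball_entropy del <= ball_entropy 0 + eta.
Proof.
move=> eta_gt0; have eta2_gt0 : 0 < eta / 2 by rewrite divr_gt0.
have [_ [L _ <-] ltL] := inf_adherent eta2_gt0 (has_inf_ball_rate (lexx 0)).
have [r r_gt0 leK] := ball_cov_uniform (proj2 (max_ball_covP 0 L.+1)).
exists r => // del del_gt0 le_del.
have leK' y : (ball_cov del L.+1 y <= max_ball_cov 0 L.+1)%N.
  exact: leq_trans (le_ball_cov _ _ le_del) (leK y).
have [N0 leN0] := block_bound_ratio_le (isT : (0 < L.+1)%N)
  (ball_rate_ge0 L.+1 (lexx 0)) (ball_rate_blocks (ltW del_gt0) leK') eta2_gt0.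
have := ball_entropy_le N0 (ltW del_gt0); have := leN0 N0.+1 (leqnSn _).
move: ltL; rewrite -/(ball_entropy 0).
by set u := ball_rate del _ / _; set v := ball_rate 0 _ / _; lra.
Qed.

Lemma cvg_ball_entropy : ball_entropy @ 0^'+ --> ball_entropy 0.
Proof.
apply/cvgrPdist_le => e e_gt0; have [r r_gt0 le_r] := ball_entropy_le_near e_gt0.
near=> del.
have del_gt0 : 0 < del by near: del; exact: nbhs_right_gt.
have le_del : del <= r by near: del; exact: nbhs_right_le.
move: (le_r del del_gt0 le_del) (ball_entropy0_le (ltW del_gt0)).
set h := ball_entropy del; set h0 := ball_entropy 0 => le_h ge_h.
by rewrite ler_norml; apply/andP; split; lra.
Unshelve. all: by end_near.
Qed.

Lemma cvg_ball_quot del : 0 <= del ->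
  (fun N => ball_quot d T d' S pi N.+1 eps del) @ \oo --> (ball_entropy del / ln (1 / eps))%:E.
Proof.
move=> del_ge0; rewrite (funext (fun N => ball_quotE N.+1 del_ge0)).
apply: cvg_EFin; first exact: nearW.
exact: cvgMr_tmp (cvg_ball_rate del_ge0).
Qed.

Lemma fib_limE : fib_lim d T pi eps = (ball_entropy 0 / ln (1 / eps))%:E.
Proof.
rewrite /fib_lim (funext (fun N => fib_quot_ball_quot0 (ltn0Sn N))).
exact: cvg_lim (cvg_ball_quot (lexx 0)).
Qed.

Lemma ball_limE : ball_lim d T d' S pi eps = (ball_entropy 0 / ln (1 / eps))%:E.
Proof.
apply: cvg_lim => //.
have near_lim : {near 0^'+, (fun del => (ball_entropy del / ln (1 / eps))%:E) =1
    (fun del => lim ((fun N => ball_quot d T d' S pi N.+1 eps del) @ \oo))}.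
  near=> del; have del_ge0 : 0 <= del by near: del; exact: nbhs_right_ge.
  exact/esym/cvg_lim/cvg_ball_quot.
apply: cvg_trans (near_eq_cvg near_lim) _.
apply: cvg_EFin; first exact: nearW.
exact: cvgMr_tmp cvg_ball_entropy.
Unshelve. all: by end_near.
Qed.

End Scale.

Lemma fib_lim_ball_lim eps : 0 < eps -> fib_lim d T pi eps = ball_lim d T d' S pi eps.
Proof.
move=> eps_gt0; have [[x0 _]|noX] := pselect (exists x : X, True).
  by rewrite (fib_limE eps_gt0 x0) (ball_limE eps_gt0 x0).
have ball_fib N del : ball_quot d T d' S pi N eps del = fib_quot d T pi N eps.
  congr (ereal_sup _ * _)%E; apply: eq_imagel => y _; congr logcov.
  by apply/seteqP; split=> x; case: noX; exists x.
rewrite /ball_lim (_ : (fun del => _) = fun=> fib_lim d T pi eps) ?lim_cst //.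
by apply: funext => del; rewrite (funext (fun N => ball_fib N.+1 del)).
Qed.

End FibreCovers.

Lemma eq_elimsup0 (R : realType) (f g : R -> \bar R) :
  (forall e, 0 < e -> f e = g e) -> elimsup0 f = elimsup0 g.
Proof.
move=> fg; congr ereal_inf; apply: eq_imagel => r _.
by congr ereal_sup; apply: eq_imagel => e /andP[e_gt0 _]; exact: fg.
Qed.

Lemma eq_eliminf0 (R : realType) (f g : R -> \bar R) :
  (forall e, 0 < e -> f e = g e) -> eliminf0 f = eliminf0 g.
Proof.
move=> fg; congr ereal_sup; apply: eq_imagel => r _.
by congr ereal_inf; apply: eq_imagel => e /andP[e_gt0 _]; exact: fg.
Qed.

Theorem lemma3p2 (R : realType) (X Y : Type)
  (d : X -> X -> R) (T : X -> X) (d' : Y -> Y -> R) (S : Y -> Y)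
  (pi : X -> Y) :
  dyn_system d T -> dyn_system d' S ->
  dcontinuous d d' pi -> (forall x, pi (T x) = S (pi x)) ->
  mdimM_upper d T pi = elimsup0 (ball_lim d T d' S pi) /\
  mdimM_lower d T pi = eliminf0 (ball_lim d T d' S pi).
Proof.
move=> [dm dcpt [_ [_ _ Tcont _]]] [dm' dcpt' [_ [_ _ Scont _]]] picont piT.
have fib_ball := fib_lim_ball_lim dm Tcont dcpt dm' Scont dcpt' picont piT.
by split; [exact: eq_elimsup0 fib_ball | exact: eq_eliminf0 fib_ball].
Qed.
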